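(* Let $I,J\in\mathbb Z$ with $4I^3\ne J^2$, and let \[ g(a,c,d)=(I-12d+3ac)(96d+3ac-2I)^2-(J+27c^2+27a^2d)^2 . \] Then the affine surface $Y_{I,J}\subset\mathbb A^3$ defined by $g(a,c,d)=0$ is absolutely irreducible. *)

From mathcomp Require Import all_boot all_order all_algebra all_field.
From mathcomp Require Import mpoly.
Set Implicit Arguments. Unset Strict Implicit. Unset Printing Implicit Defensive.
Import GRing.Theory Num.Theory.
Local Open Scope ring_scope.

(* Irreducibility of a multivariate polynomial over a field: p is
   non-constant (msize p > 1, i.e. total degree >= 1), and in every
   factorisation p = q * r one factor is constant (a unit, since p <> 0). *)
Definition mirreducible (R : idomainType) (n : nat) (p : {mpoly R[n]}) : Prop :=
  (1 < msize p)%N /\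
  forall q r : {mpoly R[n]}, p = q * r -> (msize q <= 1)%N \/ (msize r <= 1)%N.

Definition va : 'I_3 := @Ordinal 3 0 isT.
Definition vc : 'I_3 := @Ordinal 3 1 isT.
Definition vd : 'I_3 := @Ordinal 3 2 isT.

Definition g_IJ (I J : int) : {mpoly algC[3]} :=
  let a : {mpoly algC[3]} := 'X_va in
  let c : {mpoly algC[3]} := 'X_vc in
  let d : {mpoly algC[3]} := 'X_vd in
  let cI : {mpoly algC[3]} := (I%:~R : algC)%:MP in
  let cJ : {mpoly algC[3]} := (J%:~R : algC)%:MP in
  (cI - 12%:R * d + 3%:R * a * c) * (96%:R * d + 3%:R * a * c - 2%:R * cI) ^+ 2
  - (cJ + 27%:R * c ^+ 2 + 27%:R * a ^+ 2 * d) ^+ 2.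

From HB Require Import structures.
From mathcomp Require Import all_boot all_order all_algebra all_field.
From mathcomp Require Import mpoly.
From mathcomp Require Import ring zify.
Import GRing.Theory Num.Theory.
Local Open Scope ring_scope.

(* Seen as a polynomial in d with coefficients in A = Qbar[a, c, d], g is a
   cubic whose leading coefficient -12 * 96^2 is a unit of A.  A factorisation
   of g must therefore have a constant factor, or a factor of degree one in d,
   and the latter gives a root x in A of g seen in this way.  There is no such
   root: the specialisation a = 0, c = t, x = p(t) would give
   (I - 12p)(96p - 2I)^2 = (J + 27t^2)^2 in Qbar[t], where the left-hand side
   is a cubic composed with p, so its degree is a multiple of 3, while the
   right-hand side has degree 4. *)

Section CubicFactor.
Variable S : idomainType.
Implicit Types P Q R : {poly S}.

Lemma poly2_root_unit P :
  size P = 2 -> lead_coef P \is a GRing.unit -> {x | root P x}.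
Proof.
case: P => [[|p0 [|p1 []]] //= nz] _; rewrite /lead_coef /= => Up1.
exists (- p0 / p1).
by rewrite /root addr_eq0 /= mul0r add0r mulrC divrK ?opprK.
Qed.

Lemma cubic_factor_unit P Q R :
  (size P <= 4)%N -> lead_coef P \is a GRing.unit -> (forall x, ~~ root P x) ->
  P = Q * R -> Q \is a GRing.unit \/ R \is a GRing.unit.
Proof.
move=> sP UP noroot defP.
have /andP[nzQ nzR] : (Q != 0) && (R != 0).
  rewrite -negb_or -mulf_eq0 -defP; apply: contraTneq UP => ->.
  by rewrite lead_coef0 unitr0.
have /andP[UQ UR] : (lead_coef Q \is a GRing.unit) && (lead_coef R \is a GRing.unit).
  by rewrite -unitrM -lead_coefM -defP.
have unit_size1 (T : {poly S}) :
    lead_coef T \is a GRing.unit -> size T = 1%N -> T \is a GRing.unit.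
  by move=> + sT; rewrite poly_unitE sT /lead_coef sT.
have [sQ1|sQ1] := eqVneq (size Q) 1%N; first by left; apply: unit_size1.
have [sR1|sR1] := eqVneq (size R) 1%N; first by right; apply: unit_size1.
have [sQ2|sQ2] := eqVneq (size Q) 2%N.
  have [x rootQx] := poly2_root_unit Q sQ2 UQ.
  by have := noroot x; rewrite defP rootM rootQx.
have [sR2|sR2] := eqVneq (size R) 2%N.
  have [x rootRx] := poly2_root_unit R sR2 UR.
  by have := noroot x; rewrite defP rootM rootRx orbT.
move: sP; rewrite defP size_mul //.
have := nzQ; have := nzR; rewrite -!size_poly_eq0; lia.
Qed.

End CubicFactor.

Lemma rmorph_mmap (n : nat) (R : nzRingType) (S T : comNzRingType) (f : R -> S)
    (phi : {rmorphism S -> T}) (h : 'I_n -> S) (p : {mpoly R[n]}) :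
  phi (mmap f h p) = mmap (phi \o f) (phi \o h) p.
Proof.
rewrite /mmap rmorph_sum; apply: eq_bigr => m _.
rewrite rmorphM rmorph_prod; congr (_ * _).
by apply: eq_bigr => j _; rewrite rmorphXn.
Qed.

Definition univar {n : nat} {R : comNzRingType} (i : 'I_n) (p : {mpoly R[n]}) :
    {poly {mpoly R[n]}} :=
  mmap (polyC \o @mpolyC n R) (fun j => if j == i then 'X else ('X_j)%:P) p.

HB.instance Definition _ n (R : comNzRingType) (i : 'I_n) :=
  GRing.RMorphism.copy (univar i)
    (mmap (polyC \o @mpolyC n R) (fun j => if j == i then 'X else ('X_j)%:P)).

Section Univar.
Variables (n : nat) (R : idomainType) (i : 'I_n).
Implicit Types (p q : {mpoly R[n]}) (c : R).

Lemma univarC c : univar i c%:MP = (c%:MP)%:P.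
Proof. exact: mmapC. Qed.

Lemma univarX j : univar i 'X_j = if j == i then 'X else ('X_j : {mpoly R[n]})%:P.
Proof. by rewrite /univar mmapX mmap1U. Qed.

Lemma horner_univar p x :
  (univar i p).[x] = mmap (@mpolyC n R) (fun j => if j == i then x else 'X_j) p.
Proof.
rewrite -[LHS]/(horner_eval x (univar i p)) rmorph_mmap.
apply: eq_bigr => m _; rewrite /= /horner_eval hornerC; congr (_ * _).
by apply: mmap1_eq => j /=; case: (j == i); rewrite ?hornerX ?hornerC.
Qed.

Lemma univarK p : (univar i p).['X_i] = p.
Proof.
rewrite horner_univar -[RHS]comp_mpoly_id.
apply: eq_bigr => m _; congr (_ * _); apply: mmap1_eq => j.
by rewrite tnth_mktuple; case: eqP => [->|].
Qed.

Lemma univar_unit p : univar i p \is a GRing.unit -> p \is a GRing.unit.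
Proof.
rewrite poly_unitE => /andP[/eqP s1 U0].
by rewrite -(univarK p) (size1_polyC (eq_leq s1)) hornerC.
Qed.

Lemma msize_unit p : p \is a GRing.unit -> (msize p <= 1)%N.
Proof. by case/andP => /eqP -> _; rewrite msizeC leq_b1. Qed.

Lemma univar_cubic_mirreducible p :
  (1 < size (univar i p) <= 4)%N -> lead_coef (univar i p) \is a GRing.unit ->
  (forall x, ~~ root (univar i p) x) -> mirreducible p.
Proof.
move=> /andP[s_gt1 s_le4] Ulead noroot; split.
  rewrite ltnNge; apply: contraTN s_gt1 => /msize1_polyC ->.
  by rewrite univarC -leqNgt size_polyC leq_b1.
move=> q r defp.
have [|/univar_unit/msize_unit|/univar_unit/msize_unit] :=
  @cubic_factor_unit _ _ (univar i q) (univar i r) s_le4 Ulead noroot.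
- by rewrite defp rmorphM.
- by left.
- by right.
Qed.

End Univar.

Definition g_expr {S : nzRingType} (i j a c d : S) : S :=
  (i - 12%:R * d + 3%:R * a * c) * (96%:R * d + 3%:R * a * c - 2%:R * i) ^+ 2
  - (j + 27%:R * c ^+ 2 + 27%:R * a ^+ 2 * d) ^+ 2.

Lemma g_IJE I J :
  g_IJ I J = g_expr (I%:~R : algC)%:MP (J%:~R : algC)%:MP 'X_va 'X_vc 'X_vd.
Proof. by []. Qed.

Lemma rmorph_g_expr (S T : comNzRingType) (f : {rmorphism S -> T}) (i j a c d : S) :
  f (g_expr i j a c d) = g_expr (f i) (f j) (f a) (f c) (f d).
Proof. by rewrite /g_expr; ring. Qed.

Section GExprCubic.
Variables (S : comNzRingType) (i j a c : S).
Let u := 3%:R * a * c.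
Let v := i + u.
Let w := u - 2%:R * i.
Let s := j + 27%:R * c ^+ 2.

Lemma g_exprE : g_expr i%:P j%:P a%:P c%:P 'X =
  Poly [:: v * w ^+ 2 - s ^+ 2;
           192%:R * v * w - 12%:R * w ^+ 2 - 54%:R * a ^+ 2 * s;
           9216%:R * v - 2304%:R * w - 729%:R * a ^+ 4;
           - 110592%:R].
Proof.
rewrite -[Poly _]/(cons_poly _ (cons_poly _ (cons_poly _ (cons_poly _ 0)))).
by rewrite !cons_poly_def mul0r add0r /g_expr /v /w /s /u; ring.
Qed.

Hypothesis nz_110592 : (110592%:R : S) != 0.

Lemma size_g_expr : size (g_expr i%:P j%:P a%:P c%:P 'X) = 4%N.
Proof. by rewrite g_exprE (PolyK (c := 0)) //= oppr_eq0. Qed.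

Lemma lead_coef_g_expr : lead_coef (g_expr i%:P j%:P a%:P c%:P 'X) = - 110592%:R.
Proof. by rewrite lead_coefE size_g_expr g_exprE (PolyK (c := 0)) //= oppr_eq0. Qed.

End GExprCubic.

Lemma g_expr_a0_neq0 {F : numDomainType} (i j : F) (p : {poly F}) :
  g_expr i%:P j%:P 0 'X p != 0.
Proof.
set h := g_expr i%:P 0 0 0 'X.
have deg_h : (size h).-1 = 3%N by rewrite /h -polyC0 size_g_expr ?pnatr_eq0.
have deg_rhs : (size ((j%:P + 27%:R * 'X ^+ 2 : {poly F}) ^+ 2)).-1 = 4%N.
  rewrite size_exp addrC size_polyDl -polyC_natr size_Cmul ?pnatr_eq0 ?size_polyXn //.
  by rewrite (leq_ltn_trans (size_polyC_leq1 _)).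
have -> : g_expr i%:P j%:P 0 'X p = h \Po p - (j%:P + 27%:R * 'X ^+ 2) ^+ 2.
  by rewrite /h rmorph_g_expr /= comp_polyC comp_polyX rmorph0 /g_expr; ring.
rewrite subr_eq0; apply/eqP => E.
have := size_comp_poly h p; rewrite E deg_h deg_rhs; lia.
Qed.

Lemma univar_g_IJE I J :
  univar vd (g_IJ I J) =
  g_expr ((I%:~R : algC)%:MP)%:P ((J%:~R : algC)%:MP)%:P ('X_va)%:P ('X_vc)%:P 'X.
Proof. by rewrite g_IJE rmorph_g_expr /= !univarC !univarX. Qed.

Lemma univar_g_IJ_noroot I J (x : {mpoly algC[3]}) :
  ~~ root (univar vd (g_IJ I J)) x.
Proof.
pose phi := mmap (polyC : algC -> {poly algC}) (fun j => if j == vc then 'X else 0).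
move: (g_expr_a0_neq0 I%:~R J%:~R (phi x)); apply: contraNN => /eqP gx0.
apply/eqP; rewrite -[RHS](rmorph0 phi) -gx0 univar_g_IJE -[_.[x]]/(horner_eval x _).
by rewrite !rmorph_g_expr /= /horner_eval !hornerC hornerX !mmapC !mmapX !mmap1U.
Qed.

Theorem lemma6p2 (I J : int) (hIJ : 4 * I ^+ 3 != J ^+ 2) :
  mirreducible (g_IJ I J).
Proof.
have nz_110592 : (110592%:R : {mpoly algC[3]}) != 0.
  by rewrite -mpolyC_nat mpolyC_eq0 pnatr_eq0.
apply: (@univar_cubic_mirreducible _ _ vd); rewrite ?univar_g_IJE.
- by rewrite size_g_expr.
- by rewrite lead_coef_g_expr // unitrN -mpolyC_nat rmorph_unit // unitfE pnatr_eq0.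
- by move=> x; rewrite -univar_g_IJE univar_g_IJ_noroot.
Qed.
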